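(* Let $\Gamma=(G,\sigma)$ be a connected signed graph on $n$ vertices, let $M$ be any real symmetric $n\times n$ matrix compatible with $\Gamma$, let $\lambda_n$ be the largest eigenvalue of $M$, and let $f_n$ be an eigenfunction of $M$ for $\lambda_n$. Then $\Gamma$ is antibalanced if and only if $\mathfrak{W}(f_n)=\mathfrak{S}(f_n)=n$. Moreover, when $\Gamma$ is antibalanced, $\lambda_n$ is simple.
   Context: Graphs are finite, simple, undirected. A signed graph $\Gamma=(G,\sigma)$ is a graph $G=(V,E)$ with $\sigma:E\to\{+1,-1\}$. It is antibalanced if every odd cycle has negative sign and every even cycle positive sign (sign of a cycle = product of signs of its edges). The induced signed graph of a real symmetric $n\times n$ matrix $M$ has vertices $x_1,\dots,x_n$, edge $\{x_i,x_j\}$ iff $i\neq j$ and $M_{ij}\ne0$, with sign $-M_{ij}/|M_{ij}|$; $M$ is compatible with $\Gamma$ if its induced signed graph is $\Gamma$. Eigenfunctions are nonzero eigenvectors, viewed as functions on $V$. A walk is $y_1,\dots,y_m$ ($m\ge2$) with consecutive vertices adjacent. For $f:V\to\mathbb R$, $\Omega=\{x:f(x)\ne0\}$. S-walk: $f(y_j)\sigma_{y_jy_{j+1}}f(y_{j+1})>0$ for all $j$. W-walk: for any two consecutive nonzeros $y_i,y_j$ ($i<j$, $f(y_l)=0$ for $i<l<j$), $f(y_i)\sigma_{y_iy_{i+1}}\cdots\sigma_{y_{j-1}y_j}f(y_j)>0$. $\mathfrak{S}(f)$ is the number of equivalence classes on $\Omega$ of the relation ''$x=y$ or an S-walk connects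 $x$ and $y$'' (the strong nodal domains), and $\mathfrak{W}(f)$ is the number of classes of ''$x=y$ or a W-walk connects $x$ and $y$'' (the weak nodal domains). *)

From HB Require Import structures.
From mathcomp Require Import all_boot all_order all_algebra.
From mathcomp Require Import boolp reals.
Set Implicit Arguments. Unset Strict Implicit. Unset Printing Implicit Defensive.
Import Order.TTheory GRing.Theory Num.Theory.
Local Open Scope ring_scope.

Section SignedGraphs.
Variables (R : realType) (n : nat).

(* A signed graph on vertex set 'I_n: simple graph [adj] with edge signs [sgn]
   (only the values on edges matter). *)
Definition signed_graph (adj : rel 'I_n) (sgn : 'I_n -> 'I_n -> R) : Prop :=
  [/\ symmetric adj, irreflexive adj,
      (forall i j, adj i j -> sgn i j = sgn j i) &
      (forall i j, adj i j -> sgn i j = 1 \/ sgn i j = -1)].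

Definition connected_graph (adj : rel 'I_n) : Prop :=
  forall i j, connect adj i j.

Definition compatible (adj : rel 'I_n) (sgn : 'I_n -> 'I_n -> R)
    (M : 'M[R]_n) : Prop :=
  forall i j, i != j ->
    (adj i j = (M i j != 0)) /\ (adj i j -> sgn i j = - Num.sg (M i j)).

(* Sign of the closed walk listed by s: product of the signs of the edges
   s_0 s_1, ..., s_{k-2} s_{k-1}, s_{k-1} s_0. *)
Definition cycle_sign (sgn : 'I_n -> 'I_n -> R) (s : seq 'I_n) : R :=
  \prod_(e <- zip s (rot 1 s)) sgn e.1 e.2.

Definition is_cycle (adj : rel 'I_n) (s : seq 'I_n) : Prop :=
  [/\ (3 <= size s)%N, uniq s & cycle adj s].

Definition antibalanced (adj : rel 'I_n) (sgn : 'I_n -> 'I_n -> R) : Prop :=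
  forall s, is_cycle adj s ->
    cycle_sign sgn s = (if odd (size s) then -1 else 1).

Definition walk_from_to (adj : rel 'I_n) (s : seq 'I_n) (x y : 'I_n) : Prop :=
  [/\ (2 <= size s)%N, path adj (head x s) (behead s),
      head x s = x & last x s = y].

(* S-walk condition (d is an irrelevant default for nth). *)
Definition S_walk (sgn : 'I_n -> 'I_n -> R) (f : 'I_n -> R) (d : 'I_n)
    (s : seq 'I_n) : Prop :=
  forall j, (j.+1 < size s)%N ->
    0 < f (nth d s j) * sgn (nth d s j) (nth d s j.+1) * f (nth d s j.+1).

(* W-walk condition: for any two consecutive nonzeros y_i, y_j (all vertices
   strictly between being zeros of f), f(y_i) sigma ... sigma f(y_j) > 0. *)
Definition W_walk (sgn : 'I_n -> 'I_n -> R) (f : 'I_n -> R) (d : 'I_n)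
    (s : seq 'I_n) : Prop :=
  forall i j, (i < j)%N -> (j < size s)%N ->
    f (nth d s i) != 0 -> f (nth d s j) != 0 ->
    (forall l, (i < l)%N -> (l < j)%N -> f (nth d s l) = 0) ->
    0 < f (nth d s i) * (\prod_(i <= l < j) sgn (nth d s l) (nth d s l.+1))
        * f (nth d s j).

Definition nodal_set (f : 'I_n -> R) : {set 'I_n} := [set x | f x != 0].

Definition S_rel (adj : rel 'I_n) (sgn : 'I_n -> 'I_n -> R) (f : 'I_n -> R)
    (x y : 'I_n) : Prop :=
  x = y \/ exists s, walk_from_to adj s x y /\ S_walk sgn f x s.

Definition W_rel (adj : rel 'I_n) (sgn : 'I_n -> 'I_n -> R) (f : 'I_n -> R)
    (x y : 'I_n) : Prop :=
  x = y \/ exists s, walk_from_to adj s x y /\ W_walk sgn f x s.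

Definition nclasses (P : 'I_n -> 'I_n -> Prop) (Om : {set 'I_n}) : nat :=
  #|[set [set y in Om | `[< P x y >]] | x in Om]|.

Definition nS (adj : rel 'I_n) (sgn : 'I_n -> 'I_n -> R) (f : 'I_n -> R) :=
  nclasses (S_rel adj sgn f) (nodal_set f).
Definition nW (adj : rel 'I_n) (sgn : 'I_n -> 'I_n -> R) (f : 'I_n -> R) :=
  nclasses (W_rel adj sgn f) (nodal_set f).

Definition largest_eigenvalue (M : 'M[R]_n) (lam : R) : Prop :=
  eigenvalue M lam /\ forall mu, eigenvalue M mu -> mu <= lam.

Definition eigenfunction (M : 'M[R]_n) (lam : R) (f : 'cV[R]_n) : Prop :=
  f != 0 /\ M *m f = lam *: f.

Definition simple_eigenvalue (M : 'M[R]_n) (lam : R) : Prop :=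
  \rank (eigenspace M lam) = 1%N.

End SignedGraphs.

From HB Require Import structures.
From mathcomp Require Import all_boot all_order all_algebra.
From mathcomp Require Import boolp reals classical_sets topology normedtype derive.
From mathcomp Require Import ring lra zify.
Set Implicit Arguments. Unset Strict Implicit. Unset Printing Implicit Defensive.
Import Order.TTheory GRing.Theory Num.Theory.
Import numFieldTopology.Exports numFieldNormedType.Exports.
Local Open Scope ring_scope.

(* If Gamma is connected and antibalanced, the signs of the walks from a fixed
   root define D : V -> {1,-1} with sigma(u,v) = -D(u)D(v), since every closed
   walk has sign (-1)^length.  Compatibility then makes M(u,v)D(u)D(v) >= 0 off
   the diagonal, so replacing a top eigenvector f by D|f| cannot decrease the
   Rayleigh quotient; D|f| is again a top eigenvector (the top eigenvalue
   bounds the Rayleigh quotient: its maximum on the unit sphere is an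
   eigenvalue), and the eigen-equation at a zero of D|f| forces its neighbours
   to vanish.  By connectivity f has no zero and f(u)sigma(u,v)f(v) < 0 on
   every edge, so every vertex is its own strong and weak nodal domain, and a
   combination of two top eigenvectors vanishing at a vertex must be zero,
   which gives simplicity.  Conversely, n strong nodal domains force f to have
   no zero and no edge with f(u)sigma(u,v)f(v) > 0, which would merge two
   domains; then D = sign f switches every sign to -1. *)

Lemma lin_quad_ge0_eq0 (R : realFieldType) (a b : R) :
  (forall t, 0 <= t * a + t ^+ 2 * b) -> a = 0.
Proof.
move=> H; apply/eqP/negPn/negP => a0.
pose u := (`|b| + 1)^-1.
have u_gt0 : 0 < u by rewrite invr_gt0 ltr_wpDl.
have u_norm : u * (`|b| + 1) = 1 by rewrite mulVf // gt_eqF // ltr_wpDl.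
have au_gt0 : 0 < (a * u) ^+ 2 by rewrite exprn_even_gt0 //= mulf_neq0 // gt_eqF.
have := H (- a * u).
have -> : - a * u * a + (- a * u) ^+ 2 * b = (a * u) ^+ 2 * (b - `|b| - 1).
  transitivity (- a ^+ 2 * u * (u * (`|b| + 1)) + (a * u) ^+ 2 * b).
    by rewrite u_norm; ring.
  by ring.
by rewrite pmulr_rge0 //; have := ler_norm b; lra.
Qed.

Lemma continuous_sumr (R : realType) (T : topologicalType) (I : Type) (r : seq I)
    (F : I -> T -> R) :
  (forall i, continuous (F i)) -> continuous (fun x => \sum_(i <- r) F i x).
Proof. by move=> Fc; apply: continuous_big => //; exact: add_continuous. Qed.

Section QuadraticForm.
Variables (R : realType) (n : nat) (M : 'M[R]_n).

Definition qform (x : 'I_n -> R) := \sum_i \sum_j x i * M i j * x j.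
Definition sqnorm (x : 'I_n -> R) := \sum_i x i ^+ 2.
Definition mxapply (x : 'I_n -> R) i := \sum_j M i j * x j.

Lemma qformD x w t : qform (fun i => x i + t * w i) =
  qform x + t * (\sum_i w i * mxapply x i + \sum_i x i * mxapply w i)
  + t ^+ 2 * qform w.
Proof.
rewrite /qform /mxapply mulrDr !mulr_sumr -!big_split /=; apply: eq_bigr => i _.
by rewrite !mulr_sumr -!big_split /=; apply: eq_bigr => j _; ring.
Qed.

Lemma sqnormD x w t : sqnorm (fun i => x i + t * w i) =
  sqnorm x + t * (2 * \sum_i x i * w i) + t ^+ 2 * sqnorm w.
Proof. by rewrite /sqnorm !mulr_sumr -!big_split /=; apply: eq_bigr => i _; ring. Qed.

Lemma qformZ a x : qform (fun i => a * x i) = a ^+ 2 * qform x.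
Proof.
rewrite /qform !mulr_sumr; apply: eq_bigr => i _.
by rewrite !mulr_sumr; apply: eq_bigr => j _; ring.
Qed.

Lemma sqnormZ a x : sqnorm (fun i => a * x i) = a ^+ 2 * sqnorm x.
Proof. by rewrite /sqnorm !mulr_sumr; apply: eq_bigr => i _; ring. Qed.

Lemma qform_mxapply x : qform x = \sum_i x i * mxapply x i.
Proof.
rewrite /qform /mxapply; apply: eq_bigr => i _; rewrite mulr_sumr.
by apply: eq_bigr => j _; rewrite mulrA.
Qed.

Lemma sqnorm_ge0 x : 0 <= sqnorm x.
Proof. by apply: sumr_ge0 => i _; exact: sqr_ge0. Qed.

Lemma sqnorm_eq0 x : sqnorm x = 0 -> forall i, x i = 0.
Proof.
move=> /psumr_eq0P x0 i; apply/eqP; rewrite -sqrf_eq0; apply/eqP.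
by apply: x0 => // j _; exact: sqr_ge0.
Qed.

Lemma qform_continuous : continuous (fun y : 'rV[R]_n => qform (y ord0)).
Proof.
apply: continuous_sumr => i; apply: continuous_sumr => j y.
apply: (@continuousM R _ (fun z : 'rV[R]_n => z ord0 i * M i j)); last exact: coord_continuous.
apply: (@continuousM R _ _ (fun=> M i j)); first exact: coord_continuous.
exact: cst_continuous.
Qed.

Lemma sqnorm_continuous : continuous (fun y : 'rV[R]_n => sqnorm (y ord0)).
Proof.
apply: continuous_sumr => i y; under eq_fun do rewrite expr2.
by apply: (@continuousM R _ (fun z : 'rV[R]_n => z ord0 i)); exact: coord_continuous.
Qed.

Lemma unit_sphere_compact : compact [set y : 'rV[R]_n | sqnorm (y ord0) = 1].
Proof.
have box_compact := @rV_compact R n (fun=> `[-1, 1]%classic) (fun=> @segment_compact R (-1) 1).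
apply: subclosed_compact box_compact _.
- have := @preimage_closed _ _ (fun y : 'rV[R]_n => sqnorm (y ord0)) [set x | x = 1].
  by apply=> [y _|]; [exact: sqnorm_continuous|exact: closed_eq].
- move=> y /= y1 i; rewrite in_itv /= -ler_norml -(ler_pXn2r (isT : (0 < 2)%N)) ?nnegrE //.
  rewrite expr1n real_normK ?num_real // -y1 /sqnorm (bigD1 i) //= lerDl.
  by apply: sumr_ge0 => j _; exact: sqr_ge0.
Qed.

Lemma qform_le_sphere mu : (forall y, sqnorm y = 1 -> qform y <= mu) ->
  forall x, qform x <= mu * sqnorm x.
Proof.
move=> Hmu x; have [x_eq0|x_neq0] := eqVneq (sqnorm x) 0.
  rewrite x_eq0 mulr0 qform_mxapply big1 ?lexx // => i _.
  by rewrite (sqnorm_eq0 x_eq0) mul0r.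
have s_gt0 : 0 < Num.sqrt (sqnorm x) by rewrite sqrtr_gt0 lt_def x_neq0 sqnorm_ge0.
set s := Num.sqrt _ in s_gt0; have s2 : s ^+ 2 = sqnorm x by rewrite sqr_sqrtr ?sqnorm_ge0.
have s2_neq0 : s ^+ 2 != 0 by rewrite expf_neq0 // gt_eqF.
have := Hmu (fun i => s^-1 * x i); rewrite qformZ sqnormZ -s2 exprVn mulVf // => /(_ erefl).
by rewrite -(ler_pM2l (exprn_gt0 2 s_gt0)) mulrA mulfV // mul1r mulrC.
Qed.

Lemma qform_max_sphere (i0 : 'I_n) :
  exists2 u, sqnorm u = 1 & forall y, sqnorm y = 1 -> qform y <= qform u.
Proof.
pose S := [set y : 'rV[R]_n | sqnorm (y ord0) = 1]%classic.
have S0 : (S !=set0)%classic.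
  exists (delta_mx ord0 i0); rewrite /S /= /sqnorm (bigD1 i0) //=.
  by rewrite mxE !eqxx expr1n big1 ?addr0 // => i /negbTE ni; rewrite mxE ni andbF expr0n.
have [u uS umax] := EVT_max_rV S0 unit_sphere_compact (continuous_subspaceT qform_continuous).
exists (u ord0); first exact: set_mem uS.
move=> y y1; have rowK : (\row_i y i) ord0 = y by apply/funext => i; rewrite mxE.
by have := umax (\row_i y i) (mem_set _); rewrite rowK; apply; rewrite /S /= rowK.
Qed.

Hypothesis Msym : forall i j, M i j = M j i.

Lemma mxapply_sym x w : \sum_i x i * mxapply w i = \sum_i w i * mxapply x i.
Proof.
rewrite /mxapply; under eq_bigr do rewrite mulr_sumr.
rewrite exchange_big /=; apply: eq_bigr => j _.
by rewrite mulr_sumr; apply: eq_bigr => i _; rewrite Msym; ring.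
Qed.

Lemma rayleigh_eq_eigen c g : (forall x, qform x <= c * sqnorm x) ->
  qform g = c * sqnorm g -> forall i, mxapply g i = c * g i.
Proof.
move=> Hc Hg; pose r i := c * g i - mxapply g i.
suff /sqnorm_eq0 r0 : sqnorm r = 0.
  by move=> i; apply/eqP; rewrite eq_sym -subr_eq0; apply/eqP; exact: r0.
have E : sqnorm r = c * \sum_i g i * r i - \sum_i r i * mxapply g i.
  by rewrite /sqnorm mulr_sumr -sumrB; apply: eq_bigr => i _; rewrite /r; ring.
(* Along the residual r = c g - M g, the first-order variation of
   c * sqnorm - qform at g is 2 * sqnorm r. *)
have /lin_quad_ge0_eq0 :
    forall t, 0 <= t * (2 * sqnorm r) + t ^+ 2 * (c * sqnorm r - qform r).
  move=> t; have := Hc (fun i => g i + t * r i).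
  rewrite qformD sqnormD Hg (mxapply_sym g r) E; lra.
by move/eqP; rewrite mulf_eq0 pnatr_eq0 => /eqP.
Qed.

Lemma rayleigh_bound lam : (forall mu, eigenvalue M mu -> mu <= lam) ->
  forall x, qform x <= lam * sqnorm x.
Proof.
move=> Hlam; case: (pickP (@predT 'I_n)) => [i0 _|noI]; last first.
  by move=> x; rewrite qform_mxapply /sqnorm !big1 ?mulr0 // => i; have := noI i.
have [u u1 umax] := qform_max_sphere i0.
have qu_bound := qform_le_sphere umax.
have qu : qform u = qform u * sqnorm u by rewrite u1 mulr1.
have u_eigen := rayleigh_eq_eigen qu_bound qu.
move=> x; apply: le_trans (qu_bound x) (ler_wpM2r (sqnorm_ge0 x) (Hlam _ _)).
apply/eigenvalueP; exists (\row_i u i).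
  apply/rowP => j; rewrite !mxE -u_eigen.
  by apply: eq_bigr => i _; rewrite mxE Msym mulrC.
apply/eqP => u0; move/eqP: u1; rewrite /sqnorm big1 => [|i _].
  by rewrite eq_sym oner_eq0.
by have := congr1 (fun v : 'rV_n => v ord0 i) u0; rewrite !mxE => ->; rewrite expr0n.
Qed.

End QuadraticForm.

Lemma not_uniq_split (T : eqType) (s : seq T) :
  ~~ uniq s -> exists a y b c, s = a ++ y :: b ++ y :: c.
Proof.
elim: s => [|z s IH] //=; rewrite negb_and negbK => /orP [/splitPr [b c]|].
  by exists [::], z, b, c.
by case/IH => [a [y [b [c ->]]]]; exists (z :: a), y, b, c.
Qed.

Lemma exprN1_odd (R : pzRingType) k : (-1 : R) ^+ k = if odd k then -1 else 1.
Proof. by rewrite -signr_odd; case: odd; rewrite ?expr1 ?expr0. Qed.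

Section SignedWalks.
Variables (R : realType) (n : nat) (adj : rel 'I_n) (sgn : 'I_n -> 'I_n -> R).

Fixpoint walk_sign (x : 'I_n) (p : seq 'I_n) : R :=
  if p is y :: p' then sgn x y * walk_sign y p' else 1.

Lemma walk_sign_cat x p q :
  walk_sign x (p ++ q) = walk_sign x p * walk_sign (last x p) q.
Proof. by elim: p x => [|y p IH] x /=; rewrite ?mul1r // IH mulrA. Qed.

Lemma cycle_sign_cons y p :
  cycle_sign sgn (y :: p) = walk_sign y p * sgn (last y p) y.
Proof.
rewrite /cycle_sign rot1_cons.
suff gen z : \prod_(e <- zip (y :: p) (rcons p z)) sgn e.1 e.2 =
    walk_sign y p * sgn (last y p) z by exact: gen.
elim: p y => [|x p IH] y /=; first by rewrite big_seq1 mul1r.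
by rewrite big_cons IH mulrA.
Qed.

Definition neg_switching (D : 'I_n -> R) :=
  (forall i, D i ^+ 2 = 1) /\ (forall u v, adj u v -> sgn u v = - (D u * D v)).

(* Oriented for [rewrite [RHS](neg_switching_sqr ...)] before [ring]. *)
Lemma neg_switching_sqr D z i : neg_switching D -> z = z * D i ^+ 2.
Proof. by case=> D2 _; rewrite D2 mulr1. Qed.

Lemma walk_sign_switch D x p : neg_switching D -> path adj x p ->
  walk_sign x p = (-1) ^+ size p * (D x * D (last x p)).
Proof.
move=> sw; elim: p x => [|y p IH] x /=; first by rewrite mul1r -expr2 sw.1.
case/andP => xy hp; rewrite IH // sw.2 // exprS.
by rewrite [RHS](neg_switching_sqr _ y sw); ring.
Qed.

Lemma neg_switching_antibalanced D : neg_switching D -> antibalanced adj sgn.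
Proof.
move=> sw [|y p] [size_ge3 _] //; rewrite -exprN1_odd /= rcons_path => /andP [hp yl].
rewrite cycle_sign_cons (walk_sign_switch sw hp) sw.2 // exprS.
by rewrite [RHS](neg_switching_sqr _ y sw) [RHS](neg_switching_sqr _ (last y p) sw); ring.
Qed.

Hypothesis Hsg : signed_graph adj sgn.

Lemma sgn_sqr x y : adj x y -> sgn x y ^+ 2 = 1.
Proof. by case: Hsg => _ _ _ pm /pm [] ->; rewrite ?sqrrN expr1n. Qed.

Lemma walk_sign_sqr x p : path adj x p -> walk_sign x p ^+ 2 = 1.
Proof.
elim: p x => [|y p IH] x /=; first by rewrite expr1n.
by case/andP => xy hp; rewrite exprMn sgn_sqr // IH // mulr1.
Qed.

Lemma path_rev_belast x p : path adj x p -> path adj (last x p) (rev (belast x p)).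
Proof.
case: Hsg => adj_sym _ _ _; rewrite rev_path.
by rewrite (@eq_path _ _ adj) // => u v /=; rewrite adj_sym.
Qed.

Lemma last_rev_belast (x : 'I_n) p : last (last x p) (rev (belast x p)) = x.
Proof. by case: p => [|y p] //=; rewrite rev_cons last_rcons. Qed.

Lemma walk_sign_rev x p : path adj x p ->
  walk_sign (last x p) (rev (belast x p)) = walk_sign x p.
Proof.
case: Hsg => _ _ sgn_sym _; elim: p x => [|y p IH] x //= /andP [xy hp].
rewrite rev_cons -cats1 walk_sign_cat IH // last_rev_belast /=.
by rewrite mulr1 mulrC (sgn_sym _ _ xy).
Qed.

Lemma antibalanced_uniq_closed_walk x p : antibalanced adj sgn -> uniq p ->
  path adj x p -> last x p = x -> walk_sign x p = (-1) ^+ size p.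
Proof.
case: Hsg => _ adj_irr sgn_sym _ Hab.
case: p => [|y q] up; first by rewrite expr0.
rewrite /= => /andP [xy yq] yq_last.
have [q_le1|q_gt1] := leqP (size q) 1.
  case: q q_le1 up yq yq_last => [|z [|]] //= _ _.
    by move=> _ yx; move: xy; rewrite yx adj_irr.
  move=> /andP [yz _] zx; subst z.
  by rewrite mulr1 (sgn_sym _ _ xy) -expr2 sgn_sqr // sqrrN expr1n.
have cyc : is_cycle adj (y :: q) by split=> //; rewrite /= rcons_path yq yq_last.
have := Hab _ cyc; rewrite cycle_sign_cons yq_last -exprN1_odd => sign_cyc.
by rewrite mulrC; exact: sign_cyc.
Qed.

Lemma antibalanced_closed_walk x p : antibalanced adj sgn ->
  path adj x p -> last x p = x -> walk_sign x p = (-1) ^+ size p.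
Proof.
move=> Hab; have [k] := ubnP (size p); elim: k x p => // k IH x p.
case: (boolP (uniq p)) => [up _|/not_uniq_split [a [y [b [c ->]]]]].
  exact: antibalanced_uniq_closed_walk.
rewrite -!cat_rcons !size_cat !size_rcons ltnS => size_le.
rewrite !cat_path !last_cat !last_rcons => /and3P [pa pb pc] lc.
have closed_b : walk_sign y (rcons b y) = (-1) ^+ (size b).+1.
  rewrite -(size_rcons b y); apply: IH => //; last exact: last_rcons.
  by rewrite size_rcons; lia.
have closed_ac : walk_sign x (rcons a y ++ c) = (-1) ^+ ((size a).+1 + size c).
  rewrite -(size_rcons a y) -size_cat; apply: IH.
  - by rewrite size_cat size_rcons; lia.
  - by rewrite cat_path pa last_rcons.
  - by rewrite last_cat last_rcons.
rewrite !walk_sign_cat !last_rcons in closed_ac *.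
by rewrite mulrCA closed_b closed_ac -exprD addnCA.
Qed.

Lemma antibalanced_neg_switching (r : 'I_n) : antibalanced adj sgn ->
  connected_graph adj -> exists D, neg_switching D.
Proof.
move=> Hab Hc.
have ex_path v : exists p, path adj r p && (last r p == v).
  by have /connectP [p rp ->] := Hc r v; exists p; rewrite rp eqxx.
pose pv v := xchoose (ex_path v).
have pvP v : path adj r (pv v) /\ last r (pv v) = v.
  by have /andP [? /eqP ?] := xchooseP (ex_path v).
exists (fun v => (-1) ^+ size (pv v) * walk_sign r (pv v)); split.
  move=> v; rewrite exprMn walk_sign_sqr ?(pvP v).1 // mulr1.
  by rewrite -exprM mulnC exprM sqrrN !expr1n.
move=> u v uv; have [pu lu] := pvP u; have [pv_path lv] := pvP v.
set w := pv u ++ v :: rev (belast r (pv v)).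
have w_path : path adj r w.
  rewrite cat_path pu lu /= uv /=.
  by have := path_rev_belast pv_path; rewrite lv.
have w_last : last r w = r by rewrite last_cat /= -{1}lv last_rev_belast.
have := antibalanced_closed_walk Hab w_path w_last.
rewrite walk_sign_cat lu /= -{2}lv walk_sign_rev // size_cat /= size_rev size_belast.
set a := walk_sign r (pv u); set b := walk_sign r (pv v) => closed_w.
have -> : sgn u v = a ^+ 2 * b ^+ 2 * sgn u v by rewrite !walk_sign_sqr ?mul1r.
have -> : a ^+ 2 * b ^+ 2 * sgn u v = a * b * (a * (sgn u v * b)) by ring.
by rewrite closed_w exprD exprS; ring.
Qed.

End SignedWalks.

Definition mx_graph (R : realType) (n : nat) (M : 'M[R]_n) : rel 'I_n :=
  fun i j => (i != j) && (M i j != 0).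

Section PerronFrobenius.
Variables (R : realType) (n : nat) (M : 'M[R]_n) (lam : R) (D : 'I_n -> R).
Hypothesis Msym : forall i j, M i j = M j i.
Hypothesis D2 : forall i, D i ^+ 2 = 1.
Hypothesis MD_ge0 : forall i j, i != j -> 0 <= M i j * D i * D j.
Hypothesis lam_top : forall x, qform M x <= lam * sqnorm x.

Definition switched_abs (g : 'I_n -> R) i := D i * `|g i|.

Lemma sqnorm_switched_abs g : sqnorm (switched_abs g) = sqnorm g.
Proof. by apply: eq_bigr => i _; rewrite exprMn D2 mul1r real_normK ?num_real. Qed.

Lemma switched_abs_term_ge g i j :
  g i * M i j * g j <= switched_abs g i * M i j * switched_abs g j.
Proof.
rewrite /switched_abs; have [<-|ij] := eqVneq i j.
  have -> : D i * `|g i| * M i i * (D i * `|g i|) = D i ^+ 2 * `|g i| ^+ 2 * M i i by ring.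
  by rewrite D2 real_normK ?num_real // mul1r expr2 mulrAC lexx.
have normD k : `|D k| = 1 by apply/eqP; rewrite -sqr_norm_eq1 D2.
have -> : D i * `|g i| * M i j * (D j * `|g j|) = `|M i j * D i * D j| * (`|g i| * `|g j|).
  by rewrite (ger0_norm (MD_ge0 ij)); ring.
rewrite !normrM !normD !mulr1 -!normrM.
have -> : g i * M i j * g j = M i j * (g i * g j) by ring.
exact: ler_norm.
Qed.

Lemma switched_abs_top g : (forall i, mxapply M g i = lam * g i) ->
  (forall i, mxapply M (switched_abs g) i = lam * switched_abs g i) /\
  (forall i j, switched_abs g i * M i j * switched_abs g j = g i * M i j * g j).
Proof.
move=> g_eigen; set G := switched_abs g.
pose T i j := G i * M i j * G j - g i * M i j * g j.
have T_ge0 i j : 0 <= T i j by rewrite subr_ge0 switched_abs_term_ge.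
have rows_ge0 i : 0 <= \sum_j T i j by apply: sumr_ge0 => j _.
have qform_g : qform M g = lam * sqnorm g.
  by rewrite qform_mxapply /sqnorm mulr_sumr; apply: eq_bigr => i _; rewrite g_eigen; ring.
have sumT : \sum_i \sum_j T i j = qform M G - qform M g.
  by rewrite /qform -sumrB; apply: eq_bigr => i _; rewrite -sumrB.
have sumT0 : \sum_i \sum_j T i j = 0.
  apply/eqP; rewrite eq_le sumr_ge0 ?andbT // sumT subr_le0 qform_g.
  by rewrite -(sqnorm_switched_abs g) lam_top.
split.
  apply: rayleigh_eq_eigen => //; rewrite sqnorm_switched_abs -qform_g.
  by apply/eqP; rewrite -subr_eq0 -sumT sumT0.
move=> i j; have row0 := @psumr_eq0P _ _ _ _ (fun i _ => rows_ge0 i) sumT0 i isT.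
have := @psumr_eq0P _ _ _ _ (fun j _ => T_ge0 i j) row0 j isT.
by rewrite /T => /eqP; rewrite subr_eq0 => /eqP.
Qed.

Lemma switched_abs_zero_spread g z j :
  (forall i, mxapply M (switched_abs g) i = lam * switched_abs g i) ->
  g z = 0 -> mx_graph M z j -> g j = 0.
Proof.
move=> G_eigen gz /andP [zj Mzj].
have D_neq0 k : D k != 0.
  by apply: contra_eq_neq (D2 k) => ->; rewrite expr0n eq_sym oner_neq0.
have terms_ge0 k : 0 <= D z * M z k * (D k * `|g k|).
  have [<-|zk] := eqVneq z k; first by rewrite gz normr0 !mulr0.
  have -> : D z * M z k * (D k * `|g k|) = M z k * D z * D k * `|g k| by ring.
  by rewrite mulr_ge0 ?MD_ge0.
have sum0 : \sum_k D z * M z k * (D k * `|g k|) = D z * mxapply M (switched_abs g) z.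
  by rewrite /mxapply mulr_sumr; apply: eq_bigr => k _; rewrite [RHS]mulrA.
rewrite G_eigen /switched_abs gz normr0 !mulr0 in sum0.
move: (@psumr_eq0P _ _ _ _ (fun k _ => terms_ge0 k) sum0 j isT) => /eqP.
by rewrite !mulf_eq0 (negbTE (D_neq0 z)) (negbTE Mzj) (negbTE (D_neq0 j)) normr_eq0 => /eqP.
Qed.

Lemma top_eigen_neq0 g i0 : connected_graph (mx_graph M) ->
  (forall i, mxapply M g i = lam * g i) -> g i0 != 0 -> forall i, g i != 0.
Proof.
move=> Mcon g_eigen gi0 z; apply: contra_neq gi0 => gz.
have [G_eigen _] := switched_abs_top g_eigen.
have /connectP [p zp ->] := Mcon z i0.
elim: p z gz zp => [|y p IH] z gz //= /andP [zy yp].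
exact: IH (switched_abs_zero_spread G_eigen gz zy) yp.
Qed.

Lemma top_eigen_ge0 g : (forall i, mxapply M g i = lam * g i) ->
  forall i j, i != j -> 0 <= M i j * g i * g j.
Proof.
move=> g_eigen i j ij; have [_ terms] := switched_abs_top g_eigen.
have -> : M i j * g i * g j = g i * M i j * g j by ring.
rewrite -terms /switched_abs.
have -> : D i * `|g i| * M i j * (D j * `|g j|) =
  M i j * D i * D j * (`|g i| * `|g j|) by ring.
by rewrite mulr_ge0 ?MD_ge0 ?mulr_ge0.
Qed.

End PerronFrobenius.

Section Compatibility.
Variables (R : realType) (n : nat) (adj : rel 'I_n) (sgn : 'I_n -> 'I_n -> R) (M : 'M[R]_n).
Hypothesis compat : compatible adj sgn M.

Lemma compatible_mx_graph : irreflexive adj -> adj =2 mx_graph M.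
Proof.
move=> adj_irr i j; rewrite /mx_graph; have [<-|ij] := eqVneq i j; first by rewrite adj_irr.
by have [-> _] := compat ij.
Qed.

Lemma compatible_neg_switching_ge0 D : neg_switching adj sgn D ->
  forall i j, i != j -> 0 <= M i j * D i * D j.
Proof.
move=> [_ sw] i j ij; have [adjE sgnE] := compat ij.
case: (boolP (adj i j)) => [a|na]; last first.
  by move: adjE; rewrite (negbTE na) => /esym/negbFE/eqP ->; rewrite !mul0r.
have sgM : Num.sg (M i j) = D i * D j by apply: oppr_inj; rewrite -sgnE // sw.
by rewrite -mulrA -sgM mulrC -normrEsg normr_ge0.
Qed.

Lemma compatible_alternating F : irreflexive adj -> (forall i, F i != 0) ->
  (forall i j, i != j -> 0 <= M i j * F i * F j) ->
  forall i j, adj i j -> F i * sgn i j * F j < 0.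
Proof.
move=> adj_irr F0 MF_ge0 i j a.
have ij : i != j by apply: contraTneq a => ->; rewrite adj_irr.
have [adjE sgnE] := compat ij; have Mij : M i j != 0 by rewrite -adjE.
rewrite sgnE // mulrN mulNr oppr_lt0.
have : 0 < M i j * F i * F j by rewrite lt_def !mulf_neq0 ?F0 //= MF_ge0.
have -> : M i j * F i * F j = `|M i j| * (F i * Num.sg (M i j) * F j).
  by rewrite {1}[M i j]numEsg; ring.
by rewrite pmulr_rgt0 // normr_gt0.
Qed.

End Compatibility.

Section NodalDomains.
Variables (R : realType) (n : nat) (adj : rel 'I_n) (sgn : 'I_n -> 'I_n -> R) (F : 'I_n -> R).

Lemma nclasses_setT (P : 'I_n -> 'I_n -> Prop) :
  (forall x y, P x y <-> x = y) -> nclasses P [set: 'I_n] = n.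
Proof.
move=> HP; rewrite /nclasses.
have E : (fun x => [set y in [set: 'I_n] | `[< P x y >]]) =1 (fun x => [set x]).
  move=> x; apply/setP => y; rewrite !inE /=.
  by apply/asboolP/eqP => [/HP ->|->] //; exact/HP.
by rewrite (eq_imset _ E) card_imset ?cardsT ?card_ord //; exact: set1_inj.
Qed.

Lemma nclasses_eq_n (P : 'I_n -> 'I_n -> Prop) (Om : {set 'I_n}) : nclasses P Om = n ->
  Om = [set: 'I_n] /\ {in Om &, injective (fun x => [set y in Om | `[< P x y >]])}.
Proof.
rewrite /nclasses => cls_n.
have := leq_imset_card (fun x => [set y in Om | `[< P x y >]]) Om; rewrite cls_n => n_le.
have Om_le : (#|Om| <= n)%N by rewrite -[n in (_ <= n)%N]card_ord max_card.
have Om_n : #|Om| = n by apply/eqP; rewrite eqn_leq Om_le.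
split; first by apply/eqP; rewrite eqEcard finset.subsetT cardsT card_ord Om_n leqnn.
by apply/imset_injP; rewrite cls_n Om_n.
Qed.

Section Alternating.
Hypothesis F0 : forall i, F i != 0.
Hypothesis F_alt : forall i j, adj i j -> F i * sgn i j * F j < 0.

Lemma S_relE x y : S_rel adj sgn F x y <-> x = y.
Proof.
split=> [[//|[s [[size_s s_path _ _] s_walk]]]|->]; last by left.
case: s size_s s_path s_walk => [|s0 [|s1 s]] //= _ /andP [a _] s_walk.
by have := lt_trans (F_alt a) (s_walk 0%N isT); rewrite ltxx.
Qed.

Lemma W_relE x y : W_rel adj sgn F x y <-> x = y.
Proof.
split=> [[//|[s [[size_s s_path _ _] s_walk]]]|->]; last by left.
case: s size_s s_path s_walk => [|s0 [|s1 s]] //= _ /andP [a _] s_walk.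
have := s_walk 0%N 1%N isT isT (F0 _) (F0 _) (fun l l_gt0 l_lt1 => ltac:(lia)).
by rewrite big_nat1 => /(lt_trans (F_alt a)); rewrite ltxx.
Qed.

Lemma nodal_counts_alternating : nW adj sgn F = n /\ nS adj sgn F = n.
Proof.
have nodal_setT : nodal_set F = [set: 'I_n] by apply/setP => x; rewrite !inE F0.
by rewrite /nW /nS nodal_setT; split; apply: nclasses_setT; [exact: W_relE|exact: S_relE].
Qed.

End Alternating.

Lemma S_rel_cons x z y : adj z x -> 0 < F z * sgn z x * F x ->
  S_rel adj sgn F x y -> S_rel adj sgn F z y.
Proof.
move=> zx pos [<-|[s [[size_s s_path s_head s_last] s_walk]]]; right.
  by exists [:: z; x]; split; [split=> //=; rewrite zx|case].
case: s size_s s_path s_head s_last s_walk => [|s0 s] //= size_s s_path s0x s_last s_walk.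
subst s0; exists [:: z, x & s]; split; first by split=> //=; rewrite zx s_path.
case=> [|k] /= k_lt; first exact: pos.
by have := s_walk k k_lt; rewrite !(set_nth_default x z) //=; lia.
Qed.

Hypothesis Hsg : signed_graph adj sgn.

Lemma nS_eq_n_alternating : nS adj sgn F = n ->
  (forall i, F i != 0) /\ (forall i j, adj i j -> F i * sgn i j * F j < 0).
Proof.
case: Hsg => adj_sym adj_irr sgn_sym sgn_pm /nclasses_eq_n [OmT cls_inj].
have inOm x : x \in nodal_set F by rewrite OmT finset.in_setT.
have F0 i : F i != 0 by have := inOm i; rewrite inE.
split=> // i j a.
have sgn_neq0 : sgn i j != 0 by case: (sgn_pm _ _ a) => ->; rewrite ?oppr_eq0 oner_eq0.
rewrite lt_def eq_sym !mulf_neq0 ?F0 //= leNgt; apply/negP => pos.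
have pos' : 0 < F j * sgn j i * F i.
  by have -> : F j * sgn j i * F i = F i * sgn i j * F j by rewrite (sgn_sym _ _ a); ring.
have ji : adj j i by rewrite adj_sym.
have cls_eq : [set y in nodal_set F | `[< S_rel adj sgn F i y >]] =
              [set y in nodal_set F | `[< S_rel adj sgn F j y >]].
  apply/setP => y; rewrite !inE; congr (_ && _).
  by apply/asboolP/asboolP; [exact: S_rel_cons ji pos'|exact: S_rel_cons a pos].
by move: a; rewrite (cls_inj i j (inOm i) (inOm j) cls_eq) adj_irr.
Qed.

Lemma alternating_neg_switching : (forall i, F i != 0) ->
  (forall i j, adj i j -> F i * sgn i j * F j < 0) ->
  neg_switching adj sgn (fun i => Num.sg (F i)).
Proof.
case: Hsg => _ _ _ sgn_pm F0 F_alt; split=> [i|u v a]; first by rewrite sqr_sg F0.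
have sg_prod : Num.sg (F u) * sgn u v * Num.sg (F v) = -1.
  have sgn_sg : Num.sg (sgn u v) = sgn u v.
    by case: (sgn_pm _ _ a) => ->; rewrite ?sgr1 ?sgrN1.
  by rewrite -sgn_sg -!sgrM ltr0_sg ?F_alt.
have sqr_sgF (z : R) w : z = z * Num.sg (F w) ^+ 2 by rewrite sqr_sg F0 mulr1.
by rewrite -[RHS]mulN1r -sg_prod [LHS](sqr_sgF _ u) [LHS](sqr_sgF _ v); ring.
Qed.

End NodalDomains.

Lemma eigenspace_rank1 (K : fieldType) (n : nat) (M : 'M[K]_n) (lam : K) :
  eigenvalue M lam ->
  (forall v : 'rV_n, v *m M = lam *: v -> v != 0 -> forall i, v ord0 i != 0) ->
  \rank (eigenspace M lam) = 1%N.
Proof.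
move=> /eigenvalueP [u uM u_neq0] nowhere0; have /rV0Pn [i0 ui0] := u_neq0.
have uE : (u <= eigenspace M lam)%MS by apply/eigenspaceP.
have Eu : (eigenspace M lam <= u)%MS.
  apply/row_subP => k; set v := row k _.
  have vM : v *m M = lam *: v by apply/eigenspaceP; rewrite row_sub.
  set c := v ord0 i0 / u ord0 i0.
  have wM : (v - c *: u) *m M = lam *: (v - c *: u).
    by rewrite mulmxBl -scalemxAl uM vM scalerBr !scalerA mulrC.
  have /eqP : v - c *: u = 0.
    apply/eqP/negPn/negP => /(nowhere0 _ wM) /(_ i0).
    by rewrite /c !mxE divfK // subrr eqxx.
  by rewrite subr_eq0 => /eqP ->; rewrite scalemx_sub ?submx_refl.
have rank_u : \rank u = 1%N by rewrite rank_rV u_neq0.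
by apply/eqP; rewrite eqn_leq -rank_u (mxrankS Eu) (mxrankS uE).
Qed.

Lemma antibalanced_top_eigen (R : realType) (n : nat) (adj : rel 'I_n)
    (sgn : 'I_n -> 'I_n -> R) (M : 'M[R]_n) (lam : R) :
  signed_graph adj sgn -> connected_graph adj -> compatible adj sgn M ->
  (forall i k, M i k = M k i) -> (forall x, qform M x <= lam * sqnorm x) ->
  antibalanced adj sgn -> forall g j, (forall i, mxapply M g i = lam * g i) -> g j != 0 ->
  (forall i, g i != 0) /\ (forall i k, i != k -> 0 <= M i k * g i * g k).
Proof.
move=> Hsg Hc compat Msym lam_top Hab g j g_eigen gj; have [_ adj_irr _ _] := Hsg.
have [D sw] := antibalanced_neg_switching Hsg j Hab Hc.
have MD_ge0 := compatible_neg_switching_ge0 compat sw.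
have Mcon : connected_graph (mx_graph M).
  by move=> i k; rewrite -(eq_connect (compatible_mx_graph compat adj_irr)).
split; first exact: (top_eigen_neq0 Msym sw.1 MD_ge0 lam_top Mcon g_eigen gj).
exact: (top_eigen_ge0 Msym sw.1 MD_ge0 lam_top g_eigen).
Qed.

Theorem theorem3p4 (R : realType) (n : nat) (adj : rel 'I_n)
    (sgn : 'I_n -> 'I_n -> R) (M : 'M[R]_n) (lam : R) (f : 'cV[R]_n) :
  signed_graph adj sgn -> connected_graph adj ->
  M^T = M -> compatible adj sgn M ->
  largest_eigenvalue M lam -> eigenfunction M lam f ->
  (antibalanced adj sgn <->
     (nW adj sgn (fun i => f i ord0) = n /\ nS adj sgn (fun i => f i ord0) = n))
  /\ (antibalanced adj sgn -> simple_eigenvalue M lam).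
Proof.
move=> Hsg Hc MT compat [lam_eig lam_max] [f_neq0 f_eigen].
have [_ adj_irr _ _] := Hsg; have /cV0Pn [i0 fi0] := f_neq0.
have Msym i j : M i j = M j i by rewrite -[in LHS]MT mxE.
have top_eigen := antibalanced_top_eigen Hsg Hc compat Msym (rayleigh_bound Msym lam_max).
have f_top i : mxapply M (fun i => f i ord0) i = lam * f i ord0.
  by have := congr1 (fun A : 'cV[R]_n => A i ord0) f_eigen; rewrite !mxE.
split; first split.
- move=> Hab; have [F0 MF_ge0] := top_eigen Hab _ _ f_top fi0.
  exact/nodal_counts_alternating/(compatible_alternating compat adj_irr F0 MF_ge0).
- case=> _ /(nS_eq_n_alternating Hsg) [F0 F_alt].
  exact: neg_switching_antibalanced (alternating_neg_switching Hsg F0 F_alt).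
- move=> Hab; apply: eigenspace_rank1 lam_eig _ => v vM /rV0Pn [j vj].
  suff v_top i : mxapply M (v ord0) i = lam * v ord0 i.
    by have [] := top_eigen Hab _ _ v_top vj.
  have := congr1 (fun A : 'rV[R]_n => A ord0 i) vM; rewrite !mxE => <-.
  by apply: eq_bigr => k _; rewrite Msym mulrC.
Qed.
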